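(* Let $G$ be an almost Abelian Lie group with Lie algebra $\mathfrak g=\mathbb{R}\xi\ltimes_AV$, where $V$ is an Abelian ideal of codimension one and $[\xi,X]=AX$ for $X\in V$, with $A\in\mathfrak{gl}(V)$, $A\neq0$. Equip $G$ with a left-invariant Riemannian metric for which $\xi$ is a unit vector orthogonal to $V$, and write $A=A^{sy}+A^{sk}$ with $A^{sy}$ symmetric and $A^{sk}$ skew-symmetric with respect to the inner product on $V$. If $G$ is not flat, then its $0$-nullity distribution is the left-invariant distribution determined by the subspace $\ker A^{sy}\cap (A^{sk})^{-1}(\ker A^{sy})$ of $V$, where $(A^{sk})^{-1}(\ker A^{sy})=\{X\in V: A^{sk}X\in\ker A^{sy}\}$.
   Context: Curvature convention: $R(X,Y)Z=\nabla_X\nabla_YZ-\nabla_Y\nabla_XZ-\nabla_{[X,Y]}Z$. The $0$-nullity distribution is $\mathcal N_0|_p=\{z\in T_pM: R_p(x,y)z=0\ \forall x,y\in T_pM\}$. An almost Abelian Lie group is a non-Abelian connected real Lie group whose Lie algebra has a codimension one Abelian ideal. *)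

(* Almost Abelian Lie algebra g = R xi |x_A V, V = R^n (column vectors),
   elements of g represented as pairs (t, X) meaning t*xi + X. *)
From mathcomp Require Import all_boot all_order all_algebra.
From mathcomp Require Import reals.
Set Implicit Arguments. Unset Strict Implicit. Unset Printing Implicit Defensive.
Import Order.TTheory GRing.Theory Num.Theory.
Local Open Scope ring_scope.

Definition aa_alg (R : realType) (n : nat) : Type := (R * 'cV[R]_n)%type.

(* the left-invariant metric at the identity: xi unit, xi orthogonal to V,
   standard (orthonormal-coordinates) inner product on V *)
Definition aa_inner (R : realType) (n : nat) (u v : aa_alg R n) : R :=
  u.1 * v.1 + \sum_(i < n) u.2 i 0 * v.2 i 0.

Definition aa_bracket (R : realType) (n : nat) (A : 'M[R]_n)
  (u v : aa_alg R n) : aa_alg R n :=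
  (0, u.1 *: (A *m v.2) - v.1 *: (A *m u.2)).

(* Levi-Civita connection of the left-invariant metric, on left-invariant fields:
   torsion free and metric (X<Y,Z> = 0 for left-invariant fields) *)
Definition is_levi_civita (R : realType) (n : nat) (A : 'M[R]_n)
  (nabla : aa_alg R n -> aa_alg R n -> aa_alg R n) : Prop :=
  (forall x y, nabla x y - nabla y x = aa_bracket A x y) /\
  (forall x y z, aa_inner (nabla x y) z + aa_inner y (nabla x z) = 0).

Definition curv (R : realType) (n : nat) (A : 'M[R]_n)
  (nabla : aa_alg R n -> aa_alg R n -> aa_alg R n) (x y z : aa_alg R n) : aa_alg R n :=
  nabla x (nabla y z) - nabla y (nabla x z) - nabla (aa_bracket A x y) z.

(* fibre at the identity of the 0-nullity distribution *)
Definition nullity0 (R : realType) (n : nat) (A : 'M[R]_n)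
  (nabla : aa_alg R n -> aa_alg R n -> aa_alg R n) (z : aa_alg R n) : Prop :=
  forall x y, curv A nabla x y z = 0.

Definition is_flat (R : realType) (n : nat) (A : 'M[R]_n)
  (nabla : aa_alg R n -> aa_alg R n -> aa_alg R n) : Prop :=
  forall x y z, curv A nabla x y z = 0.

Definition sym_part (R : realType) (n : nat) (A : 'M[R]_n) : 'M[R]_n :=
  2^-1 *: (A + A^T).
Definition skew_part (R : realType) (n : nat) (A : 'M[R]_n) : 'M[R]_n :=
  2^-1 *: (A - A^T).

(* The Levi-Civita connection of the left-invariant metric is unique
   (Koszul) and explicit: with S and K the symmetric and skew parts of A,
   nabla_xi xi = 0, nabla_xi Y = K Y, nabla_X xi = - S X and
   nabla_X Y = <S X, Y> xi for X, Y in V.  Its curvature is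
     R(X, Y) Z = <X, S Z> S Y - <Y, S Z> S X                    on V,
     R(xi, X)(r xi + Z) = - <X, S K Z + A^T S Z> xi + r (S A - K S) X.
   A null vector r xi + Z with r <> 0 forces S A = K S, whence
   tr (S S) = tr (K S) - tr (S K) = 0, so S = 0 and G is flat.  Hence r = 0;
   the first formula then makes S of rank at most one along w = S Z, and
   pairing S K Z + A^T w = 0 with w, K being skew, gives w = 0, and then
   S K Z = 0.  Conversely such vectors are visibly null. *)

From mathcomp Require Import all_boot all_order all_algebra.
From mathcomp Require Import reals ring lra.
Set Implicit Arguments. Unset Strict Implicit. Unset Printing Implicit Defensive.
Import Order.TTheory GRing.Theory Num.Theory.
Local Open Scope ring_scope.

Lemma sym_skew_eq0 (T : Type) (R : numDomainType) (f : T -> T -> T -> R) :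
  (forall x y z, f x y z = f y x z) -> (forall x y z, f x y z = - f x z y) ->
  forall x y z, f x y z = 0.
Proof.
move=> f_sym f_skew x y z.
have f_opp : f x y z = - f x y z.
  by rewrite {1}f_skew f_sym f_skew opprK f_sym f_skew f_sym.
by apply/eqP; move/eqP: f_opp; rewrite -addr_eq0 -mulr2n mulrn_eq0.
Qed.

Lemma mulmx_cV_eq0 (R : pzSemiRingType) (m n : nat) (M : 'M[R]_(m, n)) :
  (forall v : 'cV[R]_n, M *m v = 0) -> M = 0.
Proof.
move=> Mv0; apply/matrixP => i j.
by have /matrixP/(_ i 0) := Mv0 (delta_mx j 0); rewrite -colE !mxE.
Qed.

Lemma mxtrace_mul_trmx_eq0 (R : realDomainType) (m n : nat) (M : 'M[R]_(m, n)) :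
  \tr (M *m M^T) = 0 -> M = 0.
Proof.
have sq_ge0 (x : R) : 0 <= x * x by rewrite -expr2 sqr_ge0.
rewrite /mxtrace (eq_bigr (fun i => \sum_j M i j * M i j)) => [tr0|i _]; last first.
  by rewrite mxE; apply: eq_bigr => j _; rewrite mxE.
apply/matrixP => i j; rewrite mxE.
have row_ge0 k : 0 <= \sum_j M k j * M k j by apply: sumr_ge0 => l _; exact: sq_ge0.
have row0 := psumr_eq0P (fun k _ => row_ge0 k) tr0 (i := i) isT.
have /eqP := psumr_eq0P (fun l _ => sq_ge0 (M i l)) row0 (i := j) isT.
by rewrite mulf_eq0 orbb => /eqP.
Qed.

Definition dot (R : realType) (n : nat) (u v : 'cV[R]_n) : R :=
  \sum_(i < n) u i 0 * v i 0.
Local Notation "''[' u , v ]" := (dot u v) : ring_scope.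

Section Dot.
Variables (R : realType) (n : nat).
Implicit Types (u v w : 'cV[R]_n) (M : 'M[R]_n).

Lemma dotE u v : '[u, v] = (u^T *m v) 0 0.
Proof. by rewrite mxE; apply: eq_bigr => i _; rewrite mxE. Qed.

Lemma dotC u v : '[u, v] = '[v, u].
Proof. by apply: eq_bigr => i _; rewrite mulrC. Qed.

Lemma dotDl u v w : '[u + v, w] = '[u, w] + '[v, w].
Proof. by rewrite /dot -big_split; apply: eq_bigr => i _; rewrite !mxE mulrDl. Qed.

Lemma dotZl a u v : '[a *: u, v] = a * '[u, v].
Proof. by rewrite /dot mulr_sumr; apply: eq_bigr => i _; rewrite !mxE mulrA. Qed.

Lemma dotNl u v : '[- u, v] = - '[u, v].
Proof. by rewrite -scaleN1r dotZl mulN1r. Qed.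

Lemma dotBl u v w : '[u - v, w] = '[u, w] - '[v, w].
Proof. by rewrite dotDl dotNl. Qed.

Lemma dotDr u v w : '[w, u + v] = '[w, u] + '[w, v].
Proof. by rewrite !(dotC w) dotDl. Qed.

Lemma dotZr a u v : '[v, a *: u] = a * '[v, u].
Proof. by rewrite !(dotC v) dotZl. Qed.

Lemma dotBr u v w : '[w, u - v] = '[w, u] - '[w, v].
Proof. by rewrite !(dotC w) dotBl. Qed.

Lemma dotNr u v : '[v, - u] = - '[v, u].
Proof. by rewrite !(dotC v) dotNl. Qed.

Lemma dot0l u : '[0, u] = 0.
Proof. by rewrite -(scale0r 0) dotZl mul0r. Qed.

Lemma dot0r u : '[u, 0] = 0.
Proof. by rewrite dotC dot0l. Qed.

Lemma dot_mulmxl M u v : '[M *m u, v] = '[u, M^T *m v].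
Proof. by rewrite !dotE trmx_mul mulmxA. Qed.

Lemma dot_mulmx_sym M u v : M^T = M -> '[M *m u, v] = '[u, M *m v].
Proof. by move=> symM; rewrite dot_mulmxl symM. Qed.

Lemma dot_mulmx_skew M u v : M^T = - M -> '[M *m u, v] = - '[u, M *m v].
Proof. by move=> skewM; rewrite dot_mulmxl skewM mulNmx dotNr. Qed.

Lemma dot_ge0 u : 0 <= '[u, u].
Proof. by apply: sumr_ge0 => i _; rewrite -expr2 sqr_ge0. Qed.

Lemma dot_eq0 u : '[u, u] = 0 -> u = 0.
Proof.
move=> u0; apply/matrixP => i j; rewrite (ord1 j) mxE.
have sq_ge0 k : 0 <= u k 0 * u k 0 by rewrite -expr2 sqr_ge0.
by have /eqP := psumr_eq0P (fun k _ => sq_ge0 k) u0 (i := i) isT; rewrite mulf_eq0 orbb => /eqP.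
Qed.

Lemma dot_skew_self M u : M^T = - M -> '[M *m u, u] = 0.
Proof.
by move=> skewM; have := dot_mulmx_skew u u skewM; rewrite dotC; lra.
Qed.

(* If '[Z, S Z] != 0, the first hypothesis says that S is of rank one along
   w := S Z; pairing the second one with w and using the skewness of K then
   forces K w = 0, and finally w = 0. *)
Lemma rank_one_skew_eq0 (S K : 'M[R]_n) (Z : 'cV[R]_n) : K^T = - K ->
  (forall X Y, '[X, S *m Z] *: (S *m Y) = '[Y, S *m Z] *: (S *m X)) ->
  S *m (K *m Z) + (S - K) *m (S *m Z) = 0 -> S *m Z = 0.
Proof.
move=> skewK rank_one cond; set w := S *m Z in rank_one cond *.
have SwE X : '[Z, w] *: (S *m X) = '[X, w] *: w by rewrite rank_one.
apply: dot_eq0; apply/eqP; apply: contraT => ww_neq0.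
have w_neq0 : w != 0 by move: ww_neq0; apply: contra_neq => ->; rewrite dot0l.
have Zw_neq0 : '[Z, w] != 0.
  move: ww_neq0; apply: contra_neq => Zw0; have /esym/eqP := SwE w.
  by rewrite Zw0 scale0r scaler_eq0 (negPf w_neq0) orbF => /eqP.
have E : '[K *m Z, w] *: w + ('[w, w] *: w - '[Z, w] *: (K *m w)) = 0.
  have := congr1 (fun v => '[Z, w] *: v) cond.
  by rewrite scaler0 mulmxBl scalerDr scalerBr !SwE.
have Kw_w : '[K *m w, w] = 0 by exact: dot_skew_self.
have KZw : '[K *m Z, w] = - '[w, w].
  have := congr1 (fun v => '[v, w]) E; rewrite dotDl dotBl !dotZl Kw_w dot0l mulr0 subr0.
  by rewrite -mulrDl => /eqP; rewrite mulf_eq0 (negPf ww_neq0) orbF addr_eq0 => /eqP.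
have Kw0 : K *m w = 0.
  move: E; rewrite KZw scaleNr addKr => /eqP; rewrite oppr_eq0 scaler_eq0.
  by rewrite (negPf Zw_neq0) => /eqP.
move: KZw; rewrite dot_mulmxl skewK mulNmx Kw0 oppr0 dot0r => /esym/eqP.
by rewrite oppr_eq0 (negPf ww_neq0).
Qed.

End Dot.

Section AlmostAbelian.
Variables (R : realType) (n : nat).
Implicit Types (x y z : aa_alg R n) (X Y Z : 'cV[R]_n).

Lemma innerE x y : aa_inner x y = x.1 * y.1 + '[x.2, y.2].
Proof. by []. Qed.

Lemma innerC x y : aa_inner x y = aa_inner y x.
Proof. by rewrite !innerE dotC mulrC. Qed.

Lemma innerBl x y z : aa_inner (x - y) z = aa_inner x z - aa_inner y z.
Proof. by rewrite !innerE dotBl /=; ring. Qed.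

Lemma inner_eq0 x : aa_inner x x = 0 -> x = 0.
Proof.
case: x => t X; rewrite innerE /= => xx0.
have tt_ge0 : 0 <= t * t by rewrite -expr2 sqr_ge0.
have XX_ge0 := dot_ge0 X.
have tt0 : t * t = 0 by lra.
have /dot_eq0 -> : '[X, X] = 0 by lra.
by move/eqP: tt0; rewrite mulf_eq0 orbb => /eqP ->.
Qed.

Variable A : 'M[R]_n.
Local Notation S := (sym_part A).
Local Notation K := (skew_part A).

Lemma sym_partT : S^T = S.
Proof. by rewrite /sym_part linearZ linearD /= trmxK addrC. Qed.

Lemma skew_partT : K^T = - K.
Proof. by rewrite /skew_part linearZ linearB /= trmxK -scalerN opprB. Qed.

Lemma sym_add_skew : S + K = A.
Proof.
rewrite /sym_part /skew_part -scalerDr addrACA subrr addr0 -mulr2n.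
by rewrite -scaler_nat scalerA mulVf ?scale1r // pnatr_eq0.
Qed.

Lemma trmx_sym_sub_skew : A^T = S - K.
Proof. by rewrite -[in LHS]sym_add_skew linearD /= sym_partT skew_partT. Qed.

Definition aa_lc x y : aa_alg R n :=
  ('[S *m x.2, y.2], x.1 *: (K *m y.2) - y.1 *: (S *m x.2)).

Lemma aa_lc_is_levi_civita : is_levi_civita A aa_lc.
Proof.
split=> [[t X] [s Y]|[t X] [s Y] [r Z]]; rewrite /aa_lc /=.
  congr (_, _); first by rewrite (dot_mulmx_sym _ _ sym_partT) dotC subrr.
  rewrite /= -[in RHS]sym_add_skew !mulmxDl.
  by apply/matrixP => i j; rewrite !mxE; ring.
rewrite !innerE /= !(dotBl, dotBr, dotZl, dotZr) (dot_mulmx_skew _ _ skew_partT).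
by rewrite (dotC Y (S *m X)); ring.
Qed.

Lemma levi_civita_unique nabla nabla' :
  is_levi_civita A nabla -> is_levi_civita A nabla' -> nabla =2 nabla'.
Proof.
move=> [torsion metric] [torsion' metric'].
pose D x y := nabla x y - nabla' x y.
have D_sym x y z : aa_inner (D x y) z = aa_inner (D y x) z.
  congr aa_inner; rewrite /D -[nabla x y](subrK (nabla y x)) torsion.
  by rewrite -[nabla' x y](subrK (nabla' y x)) torsion' opprD addrACA subrr add0r.
have D_skew x y z : aa_inner (D x y) z = - aa_inner (D x z) y.
  rewrite /D !innerBl (innerC (nabla x z)) (innerC (nabla' x z)).
  by have := metric x y z; have := metric' x y z; lra.
move=> x y; apply/eqP; rewrite -subr_eq0; apply/eqP/inner_eq0.
exact: (sym_skew_eq0 D_sym D_skew).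
Qed.

Lemma curv_ext nabla nabla' : nabla =2 nabla' ->
  forall x y z, curv A nabla x y z = curv A nabla' x y z.
Proof. by move=> eq_nabla x y z; rewrite /curv !eq_nabla. Qed.

(* R(xi, X)(r xi + Z) = (- '[X, cvec Z], r *: (B *m X)) *)
Local Notation B := (S *m A - K *m S).
Local Notation cvec Z := (S *m (K *m Z) + A^T *m (S *m Z)).

Lemma curv_aa_lc t X s Y r Z :
  curv A aa_lc (t, X) (s, Y) (r, Z) =
  (s * '[X, cvec Z] - t * '[Y, cvec Z],
   '[X, S *m Z] *: (S *m Y) - '[Y, S *m Z] *: (S *m X)
     + r *: (t *: (B *m Y) - s *: (B *m X))).
Proof.
rewrite /curv /aa_lc /aa_bracket /=; congr (_, _) => /=.
  rewrite mulmxBr -!scalemxAr !(dotBl, dotBr, dotZl, dotZr, dotDr).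
  rewrite (dotC (S *m Y) (S *m X)) !(dot_mulmx_sym _ _ sym_partT) !(dot_mulmxl A); ring.
rewrite !(dot_mulmx_sym _ Z sym_partT) !mulmxBl -!mulmxA !mulmxBr -!scalemxAr.
by apply/matrixP => i j; rewrite !mxE; ring.
Qed.

Lemma aa_lc_flat : S = 0 -> is_flat A aa_lc.
Proof.
move=> S0 [t X] [s Y] [r Z]; rewrite curv_aa_lc S0 !(mul0mx, mulmx0, addr0, subr0, dot0r).
by rewrite !(mulr0, scale0r, scaler0, subr0, addr0).
Qed.

Lemma sym_part_eq0 : S *m A = K *m S -> S = 0.
Proof.
move=> comm; apply: mxtrace_mul_trmx_eq0; rewrite sym_partT.
have SA : S *m A = S *m S + S *m K by rewrite -mulmxDr sym_add_skew.
have -> : S *m S = K *m S - S *m K by rewrite -comm SA addrK.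
by rewrite raddfB /= mxtrace_mulC; apply/eqP; rewrite subr_eq0.
Qed.

Lemma nullity0_aa_lc : ~ is_flat A aa_lc -> forall z,
  nullity0 A aa_lc z <-> (z.1 = 0 /\ S *m z.2 = 0 /\ S *m (K *m z.2) = 0).
Proof.
move=> nonflat [r Z] /=; split=> [null|[-> [SZ0 SKZ0]] [t X] [s Y]]; last first.
  by rewrite curv_aa_lc SZ0 SKZ0 !(mulmx0, addr0, dot0r, mulr0, subr0, scale0r).
have cvec0 : cvec Z = 0.
  apply: dot_eq0; have /(congr1 fst) := null (1, 0) (0, cvec Z).
  by rewrite curv_aa_lc /= dot0l mul0r mul1r sub0r => /eqP; rewrite oppr_eq0 => /eqP.
have r0 : r = 0.
  have [//|r_neq0] := eqVneq r 0; case: nonflat; apply: aa_lc_flat.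
  apply: sym_part_eq0; apply/eqP; rewrite -subr_eq0; apply/eqP; apply: mulmx_cV_eq0 => X.
  have /(congr1 snd) := null (1, 0) (0, X); rewrite curv_aa_lc /=.
  rewrite dot0l !(mulmx0, scale0r, scaler0, subr0, sub0r, oppr0, add0r, scale1r).
  by move/eqP; rewrite scaler_eq0 (negPf r_neq0) => /eqP.
have SZ0 : S *m Z = 0.
  apply: (rank_one_skew_eq0 skew_partT) => [X Y|]; last by rewrite -trmx_sym_sub_skew.
  have := null (0, X) (0, Y); rewrite curv_aa_lc r0 scale0r addr0 => /(congr1 snd) /=.
  by move/eqP; rewrite subr_eq0 => /eqP.
by split=> //; split=> //; move: cvec0; rewrite SZ0 mulmx0 addr0.
Qed.

End AlmostAbelian.

Theorem lemma4p1 (R : realType) (n : nat) (A : 'M[R]_n)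
  (nabla : aa_alg R n -> aa_alg R n -> aa_alg R n) :
  A != 0 ->
  is_levi_civita A nabla ->
  ~ is_flat A nabla ->
  forall z : aa_alg R n,
    nullity0 A nabla z <->
    (z.1 = 0 /\ sym_part A *m z.2 = 0 /\ sym_part A *m (skew_part A *m z.2) = 0).
Proof.
(* A != 0 is implied by non-flatness, see aa_lc_flat. *)
move=> _ lc nonflat z.
have curvE := curv_ext A (levi_civita_unique lc (aa_lc_is_levi_civita A)).
have nonflat_lc : ~ is_flat A (aa_lc A) by move=> flat; apply: nonflat => x y w; rewrite curvE.
rewrite -(nullity0_aa_lc nonflat_lc).
by split=> null x y; [rewrite -curvE | rewrite curvE].
Qed.
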